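(* Let $A\in\mathbb R^{m\times n}$ with $A\ge\mathbf 0$, $b\in\mathbb R^m$, $c\in\mathbb R^n$, and suppose the linear program $(P)$: $\max c^\intercal x$ s.t. $Ax\le b$, $x\ge\mathbf 0$ is feasible. Then $(P)$ is unbounded if and only if there exists $j^*\in[n]$ such that $c_{j^*}>0$ and the $j^*$-th column of $A$ is the zero vector.
   Context: Inequalities are componentwise. $(P)$ is unbounded if its objective is unbounded above on its feasible set. *)

From mathcomp Require Import all_boot all_order all_algebra.
From mathcomp Require Import reals.
Set Implicit Arguments. Unset Strict Implicit. Unset Printing Implicit Defensive.
Import Order.TTheory GRing.Theory Num.Theory.
Local Open Scope ring_scope.

Definition cvle (R : realType) (k : nat) (u v : 'cV[R]_k) : Prop :=
  forall i : 'I_k, u i 0 <= v i 0.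

Definition lp_feasible (R : realType) (m n : nat)
  (A : 'M[R]_(m, n)) (b : 'cV[R]_m) (x : 'cV[R]_n) : Prop :=
  cvle (A *m x) b /\ cvle 0 x.

Definition lp_obj (R : realType) (n : nat) (c : 'cV[R]_n) (x : 'cV[R]_n) : R :=
  (c^T *m x) 0 0.

Definition lp_unbounded (R : realType) (m n : nat)
  (A : 'M[R]_(m, n)) (b : 'cV[R]_m) (c : 'cV[R]_n) : Prop :=
  forall M : R, exists x, lp_feasible A b x /\ M < lp_obj c x.

From mathcomp Require Import all_boot all_order all_algebra.
From mathcomp Require Import reals lra.
Set Implicit Arguments. Unset Strict Implicit. Unset Printing Implicit Defensive.
Import Order.TTheory GRing.Theory Num.Theory.
Local Open Scope ring_scope.

(* A zero column j with c_j > 0 is a feasible ray: moving along the unit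
   vector e_j leaves A x unchanged and raises the objective linearly.
   Conversely, if every column j with c_j > 0 has a positive entry A_ij,
   then, since A >= 0 and x >= 0, feasibility gives A_ij x_j <= b_i, so each
   such x_j is bounded and so is c^T x. *)

Section LinearProgram.

Variables (R : realType) (m n : nat).
Implicit Types (A : 'M[R]_(m, n)) (b : 'cV[R]_m) (c x : 'cV[R]_n).

Lemma lp_objE c x : lp_obj c x = \sum_j c j 0 * x j 0.
Proof. by rewrite /lp_obj mxE; apply: eq_bigr => j _; rewrite mxE. Qed.

Lemma lp_obj_add_ray c x (j : 'I_n) (t : R) :
  lp_obj c (x + t *: delta_mx j 0) = lp_obj c x + t * c j 0.
Proof.
rewrite /lp_obj mulmxDr -scalemxAr -colE !mxE.
by congr (_ + _); rewrite mxE mulrC.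
Qed.

Lemma lp_feasible_add_ray A b x (j : 'I_n) (t : R) :
  col j A = 0 -> 0 <= t -> lp_feasible A b x ->
  lp_feasible A b (x + t *: delta_mx j 0).
Proof.
move=> colj t0 [hAx hx]; split=> i.
  by rewrite mulmxDr -scalemxAr -colE colj scaler0 addr0; apply: hAx.
rewrite !mxE; apply: addr_ge0; first by have := hx i; rewrite mxE.
by rewrite mulr_ge0 //; case: eqP.
Qed.

Lemma lp_unbounded_of_zero_col A b c (j : 'I_n) :
  (exists x, lp_feasible A b x) -> 0 < c j 0 -> col j A = 0 ->
  lp_unbounded A b c.
Proof.
move=> [x0 hx0] cj colj M.
pose t := (`|M| + `|lp_obj c x0| + 1) / c j 0.
have t_ge0 : 0 <= t by rewrite divr_ge0 ?ltW // ltr_wpDl ?addr_ge0.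
exists (x0 + t *: delta_mx j 0).
split; first exact: lp_feasible_add_ray.
have -> : lp_obj c (x0 + t *: delta_mx j 0) = lp_obj c x0 + `|M| + `|lp_obj c x0| + 1.
  by rewrite lp_obj_add_ray mulfVK ?gt_eqF // !addrA.
have := ler_norm M; have := ler_norm (- lp_obj c x0).
rewrite normrN; lra.
Qed.

Variable A : 'M[R]_(m, n).
Hypothesis A_ge0 : forall i j, 0 <= A i j.

Lemma col_neq0_pos_entry (j : 'I_n) : col j A != 0 -> exists i, 0 < A i j.
Proof.
move=> colj; have [/existsP // | /existsPn Anpos] := boolP [exists i, 0 < A i j].
case/eqP: colj; apply/matrixP => i k; rewrite !mxE.
by apply/eqP; rewrite eq_le A_ge0 andbT leNgt Anpos.
Qed.

Lemma lp_feasible_entry_le b x (i : 'I_m) (j : 'I_n) :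
  lp_feasible A b x -> A i j * x j 0 <= b i 0.
Proof.
have x_ge0 k : cvle 0 x -> 0 <= x k 0 by move/(_ k); rewrite mxE.
move=> [hAx hx]; apply: le_trans (hAx i).
rewrite mxE (bigD1 j) //= lerDl.
by apply: sumr_ge0 => k _; rewrite mulr_ge0 ?x_ge0.
Qed.

(* Any single positive entry of column j bounds x_j; summing over all of
   them avoids choosing one. *)
Definition coord_bound b (j : 'I_n) : R :=
  \sum_i (if 0 < A i j then `|b i 0| / A i j else 0).

Lemma lp_feasible_coord_le b x (i : 'I_m) (j : 'I_n) :
  lp_feasible A b x -> 0 < A i j -> x j 0 <= coord_bound b j.
Proof.
move=> hx Aij; apply: (@le_trans _ _ (`|b i 0| / A i j)).
  rewrite ler_pdivlMr // mulrC.
  exact: le_trans (lp_feasible_entry_le i j hx) (ler_norm _).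
rewrite /coord_bound (bigD1 i) //= Aij lerDl.
by apply: sumr_ge0 => k _; case: ifP => // Akj; rewrite divr_ge0 // ltW.
Qed.

Lemma lp_obj_le_coord_bound b c x :
  (forall j, 0 < c j 0 -> exists i, 0 < A i j) -> lp_feasible A b x ->
  lp_obj c x <= \sum_j (if 0 < c j 0 then c j 0 * coord_bound b j else 0).
Proof.
move=> hpos hx; rewrite lp_objE; apply: ler_sum => j _.
have xj_ge0 : 0 <= x j 0 by have := hx.2 j; rewrite mxE.
case: ifPn => cj; last by rewrite mulr_le0_ge0 // leNgt.
have [i Aij] := hpos j cj.
by rewrite ler_pM2l //; apply: lp_feasible_coord_le hx Aij.
Qed.

End LinearProgram.

Theorem proposition3 (R : realType) (m n : nat)
  (A : 'M[R]_(m, n)) (b : 'cV[R]_m) (c : 'cV[R]_n)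
  (hA : forall (i : 'I_m) (j : 'I_n), 0 <= A i j)
  (hfeas : exists x : 'cV[R]_n, lp_feasible A b x) :
  lp_unbounded A b c <->
  exists j : 'I_n, 0 < c j 0 /\ col j A = 0.
Proof.
split=> [unb | [j [cj colj]]]; last exact: lp_unbounded_of_zero_col hfeas cj colj.
have [/existsP [j /andP [cj /eqP colj]] | no_ray] :=
  boolP [exists j, (0 < c j 0) && (col j A == 0)]; first by exists j.
have hpos j : 0 < c j 0 -> exists i, 0 < A i j.
  move=> cj; apply: (col_neq0_pos_entry hA); apply: contra no_ray => colj.
  by apply/existsP; exists j; rewrite cj.
have [x [hx]] := unb (\sum_j (if 0 < c j 0 then c j 0 * coord_bound A b j else 0)).
by rewrite ltNge (lp_obj_le_coord_bound hA hpos hx).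
Qed.
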